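(* Let $f:[0,\infty)\to[0,\infty)$ be continuously differentiable with $f>0$ on $[t_0,\infty)$ for some $t_0\ge0$ and $f\in C^2([t_0,\infty))$, let $g=\log f$ on $[t_0,\infty)$, and assume condition (H1) of the context with the pair $(q,p)$. Then $\frac1p+\frac1q=1$, where $1/\infty=0$.
   Context: Condition (H1): (i) $g'(t)>0$ and $g''(t)>0$ for all $t\ge t_0$, and there is a pair $(q,p)$ with either $q=1$ and $p\in(0,\infty]$, or $q\in(1,\infty)$ and $p\in(0,\infty)$, such that $\lim_{t\to\infty}\frac{g'(t)^2}{g(t)g''(t)}=q$ and $\lim_{t\to\infty}\frac{tg'(t)}{g(t)}=p$; (ii) if $q=1$, then $tg'(t)/g(t)$ is nondecreasing on $[t_0,\infty)$ and there exist $k\in\mathbb{N}$ and $\hat g\in C^2([t_0,\infty))$ with $f=\exp_k\circ\hat g$ and $\hat g'/\hat g$ nonincreasing on $[t_0,\infty)$ ($\exp_1=\exp$, $\exp_k=\exp_{k-1}\circ\exp$). *)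

From Stdlib Require Import Reals.
From Coquelicot Require Import Coquelicot.
Open Scope R_scope.

Definition deriv_within (D : R -> Prop) (h : R -> R) (x l : R) : Prop :=
  filterlim (fun y => (h y - h x) / (y - x))
            (within (fun y => D y /\ y <> x) (locally x)) (locally l).

Definition cont_within (D : R -> Prop) (h : R -> R) (x : R) : Prop :=
  filterlim h (within D (locally x)) (locally (h x)).

Definition from (a : R) : R -> Prop := fun x => a <= x.

Definition C1_on_from (a : R) (h dh : R -> R) : Prop :=
  (forall x, a <= x -> deriv_within (from a) h x (dh x)) /\
  (forall x, a <= x -> cont_within (from a) dh x).

Definition C2_on_from (a : R) (h dh ddh : R -> R) : Prop :=
  (forall x, a <= x -> deriv_within (from a) h x (dh x)) /\
  (forall x, a <= x -> deriv_within (from a) dh x (ddh x)) /\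
  (forall x, a <= x -> cont_within (from a) ddh x).

(* iterated exponential: expk 1 = exp, expk (k+1) = expk k o exp
   (equivalently exp o expk k) *)
Fixpoint expk (k : nat) : R -> R :=
  match k with
  | O => fun x => x
  | S k' => fun x => exp (expk k' x)
  end.

Definition nondecr_from (a : R) (h : R -> R) : Prop :=
  forall s t, a <= s -> s <= t -> h s <= h t.
Definition nonincr_from (a : R) (h : R -> R) : Prop :=
  forall s t, a <= s -> s <= t -> h t <= h s.

(** With [h := g / g'] one has [h' = 1 - g g'' / g'^2], which tends to [1 - 1/q].
    By the mean value theorem [h(t) / t] has the same limit, and [h(t) / t] is
    the reciprocal of [t g'(t) / g(t)], whose limit is [p].  Hence [1/p = 1 - 1/q]. *)

From Stdlib Require Import Reals Lra Psatz.
From Coquelicot Require Import Coquelicot.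
Open Scope R_scope.

Lemma deriv_within_from_interior (a : R) (h : R -> R) (x l : R) :
  a < x -> deriv_within (from a) h x l -> derivable_pt_lim h x l.
Proof.
  intros Hax Hder eps Heps.
  destruct (Hder _ (locally_ball l (mkposreal eps Heps))) as [d Hd].
  assert (Hdelta : 0 < Rmin d (x - a)) by (apply Rmin_pos; [apply cond_pos | lra]).
  exists (mkposreal _ Hdelta); simpl; intros dx Hdx0 Hdx.
  assert (Hdx_d : Rabs dx < d) by (eapply Rlt_le_trans; [exact Hdx | apply Rmin_l]).
  assert (Hdx_a : Rabs dx < x - a) by (eapply Rlt_le_trans; [exact Hdx | apply Rmin_r]).
  assert (Hball : ball x d (x + dx)).
  { change (Rabs (x + dx - x) < d). now replace (x + dx - x) with dx by ring. }
  assert (Hdom : from a (x + dx) /\ x + dx <> x).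
  { apply Rabs_def2 in Hdx_a. unfold from. split; lra. }
  specialize (Hd _ Hball Hdom). change (Rabs ((h (x + dx) - h x) / (x + dx - x) - l) < eps) in Hd.
  now replace (x + dx - x) with dx in Hd by ring.
Qed.

Lemma is_lim_div_id_of_is_lim_derive (h h' : R -> R) (a c : R) :
  (forall x, a < x -> derivable_pt_lim h x (h' x)) ->
  is_lim h' p_infty c -> is_lim (fun t => h t / t) p_infty c.
Proof.
  intros Hder Hlim. apply is_lim_spec. apply is_lim_spec in Hlim.
  intros eps. pose proof (cond_pos eps) as Heps.
  destruct (Hlim (pos_div_2 eps)) as [M HM]; simpl in HM.
  set (T := Rmax (Rmax a M) 0 + 1).
  assert (HT : a < T /\ M < T /\ 0 < T).
  { unfold T. pose proof (Rmax_l (Rmax a M) 0). pose proof (Rmax_r (Rmax a M) 0).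
    pose proof (Rmax_l a M). pose proof (Rmax_r a M). lra. }
  set (K := h T - c * T).
  exists (Rmax T (2 * Rabs K / eps)); intros t Ht.
  assert (HtT : T < t) by (eapply Rle_lt_trans; [apply Rmax_l | exact Ht]).
  assert (HtK : 2 * Rabs K / eps < t) by (eapply Rle_lt_trans; [apply Rmax_r | exact Ht]).
  destruct (MVT_cor2 h h' T t HtT) as [xi [Hmvt Hxi]].
  { intros y Hy. apply Hder. lra. }
  assert (Hslope : Rabs (h' xi - c) < eps / 2) by (apply HM; lra).
  assert (HK : Rabs K < eps / 2 * t).
  { assert (2 * Rabs K / eps * eps = 2 * Rabs K) by (field; lra). nra. }
  assert (Hsplit : h t - c * t = (h' xi - c) * (t - T) + K) by (unfold K; lra).
  assert (Hnum : Rabs (h t - c * t) < eps * t).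
  { rewrite Hsplit. eapply Rle_lt_trans; [apply Rabs_triang |].
    rewrite Rabs_mult, (Rabs_pos_eq (t - T)) by lra. nra. }
  replace (h t / t - c) with ((h t - c * t) / t) by (field; lra).
  unfold Rdiv. rewrite Rabs_mult, Rabs_inv, (Rabs_pos_eq t) by lra.
  apply (Rmult_lt_reg_r t); [lra |]. rewrite Rmult_assoc, Rinv_l by lra. lra.
Qed.

(* No side conditions are needed, since [/ 0 = 0]. *)
Lemma Rinv_mul_div (t a b : R) : / (t * a / b) = b / a / t.
Proof. unfold Rdiv. rewrite !Rinv_mult, Rinv_inv. ring. Qed.

Lemma derivable_pt_lim_div_deriv (g dg ddg : R -> R) (x : R) :
  derivable_pt_lim g x (dg x) -> derivable_pt_lim dg x (ddg x) -> dg x <> 0 ->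
  derivable_pt_lim (fun t => g t / dg t) x (1 - / (dg x ^ 2 / (g x * ddg x))).
Proof.
  intros Hg Hdg Hdg0.
  replace (1 - / (dg x ^ 2 / (g x * ddg x)))
    with ((dg x * dg x - ddg x * g x) / (dg x)²).
  - exact (derivable_pt_lim_div g dg x (dg x) (ddg x) Hg Hdg Hdg0).
  - unfold Rdiv, Rsqr. rewrite (Rinv_mult (dg x ^ 2)), Rinv_inv. field. exact Hdg0.
Qed.

Theorem lemma2p2
  (f df : R -> R) (t0 : R)
  (* f : [0,oo) -> [0,oo) continuously differentiable *)
  (Hf_nonneg : forall x, 0 <= x -> 0 <= f x)
  (Hf_C1 : C1_on_from 0 f df)
  (Ht0 : 0 <= t0)
  (Hf_pos : forall x, t0 <= x -> 0 < f x)
  (* f in C^2([t0,oo)) *)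
  (Hf_C2 : exists df' ddf, C2_on_from t0 f df' ddf)
  (* g = log f on [t0,oo), with its first and second derivatives dg, ddg *)
  (g dg ddg : R -> R)
  (Hg : forall x, t0 <= x -> g x = ln (f x))
  (Hdg : forall x, t0 <= x -> deriv_within (from t0) g x (dg x))
  (Hddg : forall x, t0 <= x -> deriv_within (from t0) dg x (ddg x))
  (* condition (H1) with the pair (q,p) *)
  (q : R) (p : Rbar)
  (H1_pos : forall t, t0 <= t -> 0 < dg t /\ 0 < ddg t)
  (H1_qp : (q = 1 /\ Rbar_lt (Finite 0) p) \/
           (1 < q /\ exists r : R, p = Finite r /\ 0 < r))
  (H1_limq : is_lim (fun t => (dg t) ^ 2 / (g t * ddg t)) p_infty (Finite q))
  (H1_limp : is_lim (fun t => t * dg t / g t) p_infty p)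
  (H1_ii : q = 1 ->
     nondecr_from t0 (fun t => t * dg t / g t) /\
     exists (k : nat) (gh dgh ddgh : R -> R),
       (1 <= k)%nat /\ C2_on_from t0 gh dgh ddgh /\
       (forall t, t0 <= t -> f t = expk k (gh t)) /\
       nonincr_from t0 (fun t => dgh t / gh t)) :
  Rbar_plus (Rbar_inv p) (Finite (/ q)) = Finite 1.
Proof.
  assert (Hq0 : Finite q <> Finite 0).
  { destruct H1_qp as [[-> _] | [Hq _]]; intro H; injection H; lra. }
  assert (Hp0 : p <> Finite 0).
  { destruct H1_qp as [[_ Hp] | [_ [r [-> Hr]]]].
    - intros ->. simpl in Hp. lra.
    - intro H; injection H; lra. }
  assert (Hderiv : forall x, t0 < x ->
            derivable_pt_lim (fun t => g t / dg t) x (1 - / (dg x ^ 2 / (g x * ddg x)))).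
  { intros x Hx. destruct (H1_pos x ltac:(lra)) as [Hdgx _].
    apply derivable_pt_lim_div_deriv; try lra;
      apply (deriv_within_from_interior t0); auto; [apply Hdg | apply Hddg]; lra. }
  assert (Hlim_deriv : is_lim (fun t => 1 - / (dg t ^ 2 / (g t * ddg t))) p_infty (1 - / q)).
  { eapply is_lim_minus; [apply is_lim_const | exact (is_lim_inv _ _ _ H1_limq Hq0) |].
    reflexivity. }
  pose proof (is_lim_div_id_of_is_lim_derive _ _ _ _ Hderiv Hlim_deriv) as Hlim_ratio.
  pose proof (is_lim_inv _ _ _ H1_limp Hp0) as Hlim_inv.
  apply (is_lim_ext _ _ _ _ (fun t => Rinv_mul_div t (dg t) (g t))) in Hlim_inv.
  assert (Hinv_p : Rbar_inv p = Finite (1 - / q)).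
  { now rewrite <- (is_lim_unique _ _ _ Hlim_inv), (is_lim_unique _ _ _ Hlim_ratio). }
  rewrite Hinv_p. simpl. f_equal. ring.
Qed.
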